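(* Let $v:[\underline s,\overline s]\times\mathbb R\to[0,1]$ be four-times differentiable, strictly increasing in $s$ (with $\partial v/\partial s>0$), and strictly decreasing in $r$. Say that Assumption 1 (swingy moderates) holds if $$\frac{\partial^2}{\partial s\,\partial r}\ln\!\left(\frac{\partial v(s,r)}{\partial s}\right)>0\quad\text{for all } s,r.$$ Then: (1) If $v(s,r)=Q(s-r)$ for all $(s,r)$, where $Q$ is the cdf of a taste shock with strictly positive, differentiable density $q$, then Assumption 1 holds if and only if $q$ is strictly log-concave, i.e. $\frac{d^2}{dt^2}\ln q(t)<0$ for all $t$. (2) Assumption 1 implies that, for each $r$, the function $s\mapsto \partial v(s,r)/\partial r$ is strictly single-dipped (first decreasing, then increasing) in $s$.
   Context: $v(s,r)$ is interpreted as the share of type-$s$ voters voting for the designer's party when the aggregate shock is $r$. *)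

From Stdlib Require Import Reals.
From Coquelicot Require Import Coquelicot.
Open Scope R_scope.

Definition d_s (f : R -> R -> R) : R -> R -> R :=
  fun s r => Derive (fun s' => f s' r) s.
Definition d_r (f : R -> R -> R) : R -> R -> R :=
  fun s r => Derive (fun r' => f s r') r.

Fixpoint diffn (D : R -> R -> Prop) (n : nat) (f : R -> R -> R) : Prop :=
  match n with
  | O => True
  | S m => (forall s r, D s r -> differentiable_pt f s r)
           /\ diffn D m (d_s f) /\ diffn D m (d_r f)
  end.

Definition strip (slo shi : R) : R -> R -> Prop :=
  fun s _ => slo <= s <= shi.

Definition assumption1 (slo shi : R) (v : R -> R -> R) : Prop :=
  forall s r, slo <= s <= shi ->
    d_s (d_r (fun s' r' => ln (d_s v s' r'))) s r > 0.

Definition strictly_log_concave (q : R -> R) : Prop :=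
  forall t, Derive (fun t' => Derive (fun u => ln (q u)) t') t < 0.

Definition strictly_single_dipped (a b : R) (f : R -> R) : Prop :=
  exists m, a <= m <= b /\
    (forall x y, a <= x -> x < y -> y <= m -> f y < f x) /\
    (forall x y, m <= x -> x < y -> y <= b -> f x < f y).

From Stdlib Require Import Reals Lra Lia.
From Coquelicot Require Import Coquelicot.
Open Scope R_scope.

(* Write rho(s, r) := (d^2 v / ds dr) / (dv/ds) for the r-derivative of ln (dv/ds); Assumption 1
   says that rho is strictly increasing in s.
   (1) If v(s, r) = Q(s - r) on the strip, then dv/ds = q(s - r), so rho(s, r) = -(ln q)'(s - r)
   and d rho/ds = -(ln q)''(s - r). As s - r ranges over all reals, this is positive everywhere
   iff ln q is strictly concave.
   (2) By symmetry of second derivatives, d/ds (dv/dr) = rho * dv/ds with dv/ds > 0. Being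
   strictly increasing, rho changes sign at most once, so dv/dr decreases before that point and
   increases after it. *)

Lemma ln_sub_bounds a b : 0 < a -> 0 < b -> (a - b) / a <= ln a - ln b <= (a - b) / b.
Proof.
  intros Ha Hb.
  assert (ln_le : forall x, 0 < x -> ln x <= x - 1).
  { intros x Hx. pose proof (exp_ineq1_le (ln x)) as H. rewrite exp_ln in H; lra. }
  split.
  - pose proof (ln_le (b / a) ltac:(apply Rdiv_lt_0_compat; lra)) as H.
    rewrite ln_div in H by lra.
    replace ((a - b) / a) with (- (b / a - 1)) by (field; lra). lra.
  - pose proof (ln_le (a / b) ltac:(apply Rdiv_lt_0_compat; lra)) as H.
    rewrite ln_div in H by lra.
    replace ((a - b) / b) with (a / b - 1) by (field; lra). lra.
Qed.

Lemma ln_diff_quotient_bounds a b h c1 c2 :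
  0 < c1 -> c1 <= a <= c2 -> c1 <= b <= c2 -> 0 < h ->
  let q := (a - b) / h in let p := (ln a - ln b) / h in
  (0 < q -> / c2 * q <= p) /\ (q < 0 -> p <= / c2 * q) /\
  Rabs (p - / b * q) <= / c1 ^ 2 * h * q ^ 2.
Proof.
  intros Hc1 Ha Hb Hh q p.
  destruct (ln_sub_bounds a b) as [Llo Lhi]; try lra.
  assert (Hp : p * h = ln a - ln b) by (unfold p; field; lra).
  assert (Hq : q * h = a - b) by (unfold q; field; lra).
  assert (Hlo : / a * q <= p).
  { apply Rmult_le_reg_r with h; [lra|]. rewrite Hp.
    replace (/ a * q * h) with ((a - b) / a) by (rewrite <- Hq; field; lra). exact Llo. }
  assert (Hhi : p <= / b * q).
  { apply Rmult_le_reg_r with h; [lra|]. rewrite Hp.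
    replace (/ b * q * h) with ((a - b) / b) by (rewrite <- Hq; field; lra). exact Lhi. }
  assert (Hia : / c2 <= / a <= / c1) by (split; apply Rinv_le_contravar; lra).
  assert (Hib : / c2 <= / b <= / c1) by (split; apply Rinv_le_contravar; lra).
  split; [|split].
  - intros Hq0. apply Rle_trans with (/ a * q); [nra | exact Hlo].
  - intros Hq0. apply Rle_trans with (/ b * q); [exact Hhi | nra].
  - assert (Hgap : (/ b - / a) * q = / (a * b) * h * q ^ 2)
      by (replace a with (b + q * h) by lra; field; lra).
    assert (Hab : / (a * b) <= / c1 ^ 2) by (apply Rinv_le_contravar; nra).
    rewrite Rabs_left1 by lra.
    apply Rle_trans with ((/ b - / a) * q); [lra|]. rewrite Hgap.
    apply Rmult_le_compat_r; [nra|]. apply Rmult_le_compat_r; lra.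
Qed.

Lemma real_Lim_seq_unbounded u :
  LimSup_seq u = p_infty \/ LimInf_seq u = m_infty -> real (Lim_seq u) = 0.
Proof.
  unfold Lim_seq; intros [E | E]; rewrite E.
  - destruct (LimInf_seq u); simpl; lra.
  - destruct (LimSup_seq u); simpl; lra.
Qed.

Lemma is_LimSup_seq_near u w (l : R) :
  is_LimSup_seq w l -> is_lim_seq (fun n => u n - w n) 0 -> is_LimSup_seq u l.
Proof.
  intros Hw Hdiff eps.
  assert (Heps2 : 0 < eps / 2) by (pose proof (cond_pos eps); lra).
  destruct (Hw (mkposreal _ Heps2)) as [Hfreq [N1 Hev]]; simpl in Hfreq, Hev.
  destruct (proj2 (is_lim_seq_spec _ _) Hdiff (mkposreal _ Heps2)) as [N2 Hclose]; simpl in Hclose.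
  split.
  - intros N. destruct (Hfreq (max N N2)) as [n [Hn Hwn]]. exists n. split; [lia|].
    specialize (Hclose n ltac:(lia)). apply Rabs_lt_between in Hclose. lra.
  - exists (max N1 N2). intros n Hn.
    specialize (Hev n ltac:(lia)). specialize (Hclose n ltac:(lia)).
    apply Rabs_lt_between in Hclose. lra.
Qed.

Lemma is_LimInf_seq_near u w (l : R) :
  is_LimInf_seq w l -> is_lim_seq (fun n => u n - w n) 0 -> is_LimInf_seq u l.
Proof.
  intros Hw Hdiff. apply is_LimSup_opp_LimInf_seq.
  apply (is_LimSup_seq_near _ (fun n => - w n) (- l)).
  - exact (proj2 (is_LimSup_opp_LimInf_seq w l) Hw).
  - apply is_lim_seq_ext with (fun n => - (u n - w n)); [intros n; ring|].
    replace (Finite 0) with (Rbar_opp 0) by (simpl; f_equal; ring).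
    exact (proj1 (is_lim_seq_opp _ 0) Hdiff).
Qed.

Lemma LimSup_seq_p_infty_of_ge (p q : nat -> R) (m : R) :
  0 < m -> eventually (fun n => 0 < q n -> m * q n <= p n) ->
  LimSup_seq q = p_infty -> LimSup_seq p = p_infty.
Proof.
  intros Hm [N0 Hp] Hq.
  pose proof (proj2_sig (ex_LimSup_seq q)) as HSq; fold (LimSup_seq q) in HSq.
  rewrite Hq in HSq.
  apply is_LimSup_seq_unique. intros M N.
  destruct (HSq (Rmax (M / m) 0) (max N N0)) as [n [Hn Hqn]]. exists n. split; [lia|].
  pose proof (Rmax_l (M / m) 0). pose proof (Rmax_r (M / m) 0).
  assert (M < m * q n) by (replace M with (m * (M / m)) by (field; lra); nra).
  specialize (Hp n ltac:(lia) ltac:(lra)). lra.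
Qed.

Lemma LimInf_seq_m_infty_of_le (p q : nat -> R) (m : R) :
  0 < m -> eventually (fun n => q n < 0 -> p n <= m * q n) ->
  LimInf_seq q = m_infty -> LimInf_seq p = m_infty.
Proof.
  intros Hm [N0 Hp] Hq.
  assert (Hopp : LimSup_seq (fun n => - p n) = p_infty).
  { apply (LimSup_seq_p_infty_of_ge _ (fun n => - q n) m Hm).
    - exists N0. intros n Hn Hqn. specialize (Hp n Hn ltac:(lra)). lra.
    - rewrite LimSup_seq_opp, Hq. reflexivity. }
  rewrite LimSup_seq_opp in Hopp. destruct (LimInf_seq p); simpl in Hopp; congruence.
Qed.

Lemma eventually_sqr_le_of_LimSup_LimInf (q : nat -> R) (s i : R) :
  is_LimSup_seq q s -> is_LimInf_seq q i ->
  eventually (fun n => q n ^ 2 <= (s + 1) ^ 2 + (i - 1) ^ 2).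
Proof.
  intros HS HI.
  destruct (HS (mkposreal 1 Rlt_0_1)) as [_ [N1 Hup]].
  destruct (HI (mkposreal 1 Rlt_0_1)) as [_ [N2 Hlo]]. simpl in Hup, Hlo.
  exists (max N1 N2). intros n Hn.
  specialize (Hup n ltac:(lia)). specialize (Hlo n ltac:(lia)).
  pose proof (pow2_ge_0 (s + 1)). pose proof (pow2_ge_0 (i - 1)).
  destruct (Rle_or_lt 0 (q n)).
  - assert (q n * q n <= (s + 1) * (s + 1)) by nra. nra.
  - assert (q n * q n <= (i - 1) * (i - 1)) by nra. nra.
Qed.

(* The sign conditions carry divergence of [q] over to [p]; the quadratic error bound is only
   used while [q] stays bounded. *)
Lemma Lim_seq_scal_of_close (p q h : nat -> R) (c m K : R) :
  0 < c -> 0 < m -> is_lim_seq h 0 ->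
  eventually (fun n => (0 < q n -> m * q n <= p n) /\ (q n < 0 -> p n <= m * q n) /\
                       Rabs (p n - c * q n) <= K * h n * q n ^ 2) ->
  real (Lim_seq p) = c * real (Lim_seq q).
Proof.
  intros Hc Hm Hh Hp.
  assert (Hcases : LimSup_seq q = p_infty \/ LimInf_seq q = m_infty \/
                   exists s i : R, LimSup_seq q = s /\ LimInf_seq q = i).
  { pose proof (LimSup_LimInf_seq_le q) as Hle.
    destruct (LimSup_seq q) as [s| |], (LimInf_seq q) as [i| |]; simpl in Hle;
      try contradiction; eauto 6. }
  destruct Hcases as [E | [E | [s [i [ES EI]]]]].
  - assert (ESp : LimSup_seq p = p_infty).
    { apply (LimSup_seq_p_infty_of_ge p q m Hm); [|exact E].
      destruct Hp as [N Hp]. exists N. intros n Hn. apply Hp, Hn. }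
    rewrite !real_Lim_seq_unbounded by auto. ring.
  - assert (EIp : LimInf_seq p = m_infty).
    { apply (LimInf_seq_m_infty_of_le p q m Hm); [|exact E].
      destruct Hp as [N Hp]. exists N. intros n Hn. apply Hp, Hn. }
    rewrite !real_Lim_seq_unbounded by auto. ring.
  - pose proof (proj2_sig (ex_LimSup_seq q)) as HSq; fold (LimSup_seq q) in HSq.
    pose proof (proj2_sig (ex_LimInf_seq q)) as HIq; fold (LimInf_seq q) in HIq.
    rewrite ES in HSq. rewrite EI in HIq.
    set (B := (s + 1) ^ 2 + (i - 1) ^ 2).
    assert (Hclose : is_lim_seq (fun n => p n - c * q n) 0).
    { apply is_lim_seq_abs_0.
      apply is_lim_seq_le_le_loc with (fun _ => 0) (fun n => Rabs (K * h n) * B).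
      - destruct Hp as [N0 Hp].
        destruct (eventually_sqr_le_of_LimSup_LimInf q s i HSq HIq) as [N1 Hb].
        exists (max N0 N1). intros n Hn.
        destruct (Hp n ltac:(lia)) as [_ [_ Hpq]]. specialize (Hb n ltac:(lia)). fold B in Hb.
        split; [apply Rabs_pos|].
        apply Rle_trans with (K * h n * q n ^ 2); [exact Hpq|].
        pose proof (Rle_abs (K * h n)). pose proof (Rabs_pos (K * h n)). nra.
      - apply is_lim_seq_const.
      - replace (Finite 0) with (Rbar_mult (Rbar_abs (Rbar_mult K 0)) B)
          by (simpl; f_equal; rewrite Rmult_0_r, Rabs_R0; ring).
        apply is_lim_seq_scal_r, is_lim_seq_abs, is_lim_seq_scal_l, Hh. }
    assert (HSp : is_LimSup_seq p (c * s)).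
    { apply is_LimSup_seq_near with (fun n => c * q n); [|exact Hclose].
      apply (is_LimSup_seq_scal_pos c q s Hc HSq). }
    assert (HIp : is_LimInf_seq p (c * i)).
    { apply is_LimInf_seq_near with (fun n => c * q n); [|exact Hclose].
      apply (is_LimInf_seq_scal_pos c q i Hc HIq). }
    unfold Lim_seq.
    rewrite ES, EI, (is_LimSup_seq_unique _ _ HSp), (is_LimInf_seq_unique _ _ HIp).
    simpl. field.
Qed.

(* No differentiability of [f] is assumed: both sides are limits of the same right difference
   quotients, which [Lim_seq_scal_of_close] compares even when they diverge. *)
Lemma Derive_ln_comp_bounded (f : R -> R) x d c1 c2 :
  0 < c1 -> 0 < d -> (forall y, x <= y <= x + d -> c1 <= f y <= c2) ->
  Derive (fun y => ln (f y)) x = Derive f x / f x.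
Proof.
  intros Hc1 Hd Hf. unfold Derive, Lim.
  set (h := Rbar_loc_seq 0).
  assert (Hh_pos : forall n, 0 < h n).
  { intros n. unfold h; simpl. rewrite Rplus_0_l. apply Rinv_0_lt_compat.
    pose proof (pos_INR n). lra. }
  assert (Hfx : c1 <= f x <= c2) by (apply Hf; lra).
  rewrite (Lim_seq_scal_of_close (fun n => (ln (f (x + h n)) - ln (f x)) / h n)
             (fun n => (f (x + h n) - f x) / h n) h (/ f x) (/ c2) (/ c1 ^ 2)).
  - unfold Rdiv. ring.
  - apply Rinv_0_lt_compat. lra.
  - apply Rinv_0_lt_compat. lra.
  - apply (is_lim_seq_Rbar_loc_seq 0).
  - destruct (proj2 (is_lim_seq_spec _ _) (is_lim_seq_Rbar_loc_seq 0) (mkposreal d Hd)) as [N HN].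
    exists N. intros n Hn. specialize (HN n Hn). specialize (Hh_pos n).
    change (Rabs (h n - 0) < d) in HN. rewrite Rminus_0_r, Rabs_pos_eq in HN by lra.
    apply (ln_diff_quotient_bounds (f (x + h n)) (f x)); try lra. apply Hf. lra.
Qed.

Lemma is_derive_unique_on_interval (f g : R -> R) a b x lf lg :
  a < b -> a <= x <= b -> (forall y, a <= y <= b -> f y = g y) ->
  is_derive f x lf -> is_derive g x lg -> lf = lg.
Proof.
  intros Hab Hx Hfg Hf Hg.
  assert (Hdiff : derivable_pt_lim (fun y => f y - g y) x (lf - lg)).
  { apply derivable_pt_lim_minus; apply is_derive_Reals; assumption. }
  destruct (Req_dec lf lg) as [|Hne]; [assumption|exfalso].
  assert (Heps : 0 < Rabs (lf - lg)) by (apply Rabs_pos_lt; lra).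
  destruct (Hdiff _ Heps) as [delta Hdelta].
  set (h0 := Rmin (delta / 2) ((b - a) / 2)).
  assert (Hh0 : 0 < h0) by (apply Rmin_pos; pose proof (cond_pos delta); lra).
  assert (Hh0d : h0 < delta).
  { pose proof (Rmin_l (delta / 2) ((b - a) / 2)). pose proof (cond_pos delta). unfold h0. lra. }
  assert (Hh0ab : h0 <= (b - a) / 2) by apply Rmin_r.
  (* along a step staying in [a, b] the difference quotient of [f - g] vanishes *)
  assert (Hstep : exists h, h <> 0 /\ Rabs h < delta /\ a <= x + h <= b).
  { destruct (Rle_or_lt (x + h0) b).
    - exists h0. rewrite Rabs_pos_eq by lra. repeat split; lra.
    - exists (- h0). rewrite Rabs_Ropp, Rabs_pos_eq by lra. repeat split; lra. }
  destruct Hstep as [h [Hh0' [Hhd Hxh]]].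
  specialize (Hdelta h Hh0' Hhd).
  rewrite (Hfg x Hx), (Hfg (x + h) Hxh) in Hdelta.
  replace ((g (x + h) - g (x + h) - (g x - g x)) / h - (lf - lg)) with (- (lf - lg)) in Hdelta
    by (field; assumption).
  rewrite Rabs_Ropp in Hdelta. lra.
Qed.

Lemma lt_of_Derive_pos (f : R -> R) a b :
  a < b -> (forall x, a <= x <= b -> ex_derive f x) -> (forall x, a < x < b -> 0 < Derive f x) ->
  f a < f b.
Proof.
  intros Hab Hf Hpos.
  destruct (MVT_cor2 f (Derive f) a b Hab) as [c [Hmvt Hc]].
  { intros c Hc. apply is_derive_Reals, Derive_correct, Hf. exact Hc. }
  specialize (Hpos c Hc). nra.
Qed.

Lemma strictly_single_dipped_of_Derive (f g w : R -> R) a b :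
  a < b ->
  (forall x, a <= x <= b -> ex_derive f x) ->
  (forall x, a <= x <= b -> ex_derive g x) ->
  (forall x, a <= x <= b -> 0 < Derive g x) ->
  (forall x, a < x < b -> 0 < w x /\ Derive f x = g x * w x) ->
  strictly_single_dipped a b f.
Proof.
  intros Hab Hf Hg Hg' Hw.
  assert (Hg_incr : forall x y, a <= x -> x < y -> y <= b -> g x < g y).
  { intros x y Hx Hxy Hy.
    apply (lt_of_Derive_pos g x y Hxy); intros z Hz; [apply Hg | apply Hg']; lra. }
  assert (Hf_decr : forall x y, a <= x -> x < y -> y <= b -> (forall z, x < z < y -> g z < 0) ->
                      f y < f x).
  { intros x y Hx Hxy Hy Hneg.
    enough (- f x < - f y) by lra.
    apply (lt_of_Derive_pos (fun z => - f z) x y Hxy); intros z Hz.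
    - apply (ex_derive_opp f), Hf. lra.
    - rewrite Derive_opp. destruct (Hw z ltac:(lra)) as [Hwz ->].
      specialize (Hneg z Hz). nra. }
  assert (Hf_incr : forall x y, a <= x -> x < y -> y <= b -> (forall z, x < z < y -> 0 < g z) ->
                      f x < f y).
  { intros x y Hx Hxy Hy Hpos.
    apply (lt_of_Derive_pos f x y Hxy); intros z Hz.
    - apply Hf. lra.
    - destruct (Hw z ltac:(lra)) as [Hwz ->]. specialize (Hpos z Hz). nra. }
  (* the dip is at the zero of the increasing function [g], or at an end of [a, b] *)
  destruct (Rle_or_lt 0 (g a)) as [Hga | Hga].
  { exists a. split; [lra | split]; [intros; lra |].
    intros x y Hx Hxy Hy. apply Hf_incr; try lra. intros z Hz.
    pose proof (Hg_incr a z ltac:(lra) ltac:(lra) ltac:(lra)). lra. }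
  destruct (Rle_or_lt (g b) 0) as [Hgb | Hgb].
  { exists b. split; [lra | split]; [| intros; lra].
    intros x y Hx Hxy Hy. apply Hf_decr; try lra. intros z Hz.
    pose proof (Hg_incr z b ltac:(lra) ltac:(lra) ltac:(lra)). lra. }
  assert (Hg_cont : forall x, a <= x <= b -> continuity_pt g x).
  { intros x Hx. apply derivable_continuous_pt, ex_derive_Reals_0, Hg, Hx. }
  destruct (Ranalysis5.IVT_interv g a b Hg_cont Hab Hga Hgb) as [m [Hm Hgm]].
  exists m. split; [lra | split].
  - intros x y Hx Hxy Hy. apply Hf_decr; try lra. intros z Hz.
    pose proof (Hg_incr z m ltac:(lra) ltac:(lra) ltac:(lra)). lra.
  - intros x y Hx Hxy Hy. apply Hf_incr; try lra. intros z Hz.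
    pose proof (Hg_incr m z ltac:(lra) ltac:(lra) ltac:(lra)). lra.
Qed.

Lemma differentiable_pt_ex_derive_l (f : R -> R -> R) x y :
  differentiable_pt f x y -> ex_derive (fun x' => f x' y) x.
Proof.
  intros [lx [ly H]]. exists lx. apply is_derive_Reals.
  pose proof (derivable_pt_lim_comp_2d f id (fct_cte y) x lx ly 1 0 H
                (derivable_pt_lim_id x) (derivable_pt_lim_const y x)) as Hcomp.
  replace lx with (lx * 1 + ly * 0) by ring. exact Hcomp.
Qed.

Lemma differentiable_pt_ex_derive_r (f : R -> R -> R) x y :
  differentiable_pt f x y -> ex_derive (fun y' => f x y') y.
Proof.
  intros [lx [ly H]]. exists ly. apply is_derive_Reals.
  pose proof (derivable_pt_lim_comp_2d f (fct_cte x) id y lx ly 0 1 H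
                (derivable_pt_lim_const x y) (derivable_pt_lim_id y)) as Hcomp.
  replace ly with (lx * 0 + ly * 1) by ring. exact Hcomp.
Qed.

Lemma diffn_pred D n f : diffn D (S n) f -> diffn D n f.
Proof.
  revert f. induction n as [|n IH]; intros f Hf; [exact I|].
  destruct Hf as [Hf [Hs Hr]]. repeat split; auto.
Qed.

Section SwingyModerates.

Variables (slo shi : R) (v : R -> R -> R).
Hypothesis slo_lt_shi : slo < shi.
Hypothesis v_diff : diffn (strip slo shi) 3 v.
Hypothesis d_s_v_pos : forall s r, slo <= s <= shi -> d_s v s r > 0.

Lemma differentiable_v s r : slo <= s <= shi -> differentiable_pt v s r.
Proof. destruct v_diff as [H _]. exact (H s r). Qed.

Lemma differentiable_d_s_v s r : slo <= s <= shi -> differentiable_pt (d_s v) s r.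
Proof. destruct v_diff as [_ [[H _] _]]. exact (H s r). Qed.

Lemma differentiable_d_r_v s r : slo <= s <= shi -> differentiable_pt (d_r v) s r.
Proof. destruct v_diff as [_ [_ [H _]]]. exact (H s r). Qed.

Lemma differentiable_d_r_d_s_v s r : slo <= s <= shi -> differentiable_pt (d_r (d_s v)) s r.
Proof. destruct v_diff as [_ [[_ [_ [H _]]] _]]. exact (H s r). Qed.

Lemma differentiable_d_s_d_r_v s r : slo <= s <= shi -> differentiable_pt (d_s (d_r v)) s r.
Proof. destruct v_diff as [_ [_ [_ [[H _] _]]]]. exact (H s r). Qed.

Definition dr_ln_ds (s r : R) : R := d_r (d_s v) s r / d_s v s r.

(* [d_s v] is only known to be differentiable on the strip, so at [s'] just outside it the
   r-derivative of [ln (d_s v)] can only be computed by [Derive_ln_comp_bounded]. *)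
Lemma d_r_ln_d_s_v_near s r : slo <= s <= shi ->
  locally s (fun s' => d_r (fun s0 r0 => ln (d_s v s0 r0)) s' r = dr_ln_ds s' r).
Proof.
  intros Hs.
  pose proof (d_s_v_pos s r Hs) as Hpos.
  assert (Heps : 0 < d_s v s r / 2) by lra.
  destruct (differentiable_continuity_pt _ _ _ (differentiable_d_s_v s r Hs) (mkposreal _ Heps))
    as [d Hd]; simpl in Hd.
  assert (Hd2 : 0 < d / 2) by (pose proof (cond_pos d); lra).
  exists (mkposreal _ Hd2). intros s' Hs'. change (Rabs (s' - s) < d / 2) in Hs'.
  apply (Derive_ln_comp_bounded (fun r' => d_s v s' r') r (d / 2)
           (d_s v s r / 2) (3 * d_s v s r / 2)); [lra | lra |].
  intros y Hy.
  assert (Hy' : Rabs (y - r) < d) by (rewrite Rabs_pos_eq; lra).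
  specialize (Hd s' y ltac:(lra) Hy'). apply Rabs_lt_between in Hd. lra.
Qed.

Lemma ex_derive_dr_ln_ds s r : slo <= s <= shi -> ex_derive (fun s' => dr_ln_ds s' r) s.
Proof.
  intros Hs. apply ex_derive_div.
  - apply differentiable_pt_ex_derive_l, differentiable_d_r_d_s_v, Hs.
  - apply differentiable_pt_ex_derive_l, differentiable_d_s_v, Hs.
  - pose proof (d_s_v_pos s r Hs). lra.
Qed.

Lemma d_s_d_r_ln_d_s_v s r : slo <= s <= shi ->
  d_s (d_r (fun s' r' => ln (d_s v s' r'))) s r = Derive (fun s' => dr_ln_ds s' r) s.
Proof. intros Hs. apply Derive_ext_loc, d_r_ln_d_s_v_near, Hs. Qed.

Lemma Derive_d_r_v s r : slo < s < shi ->
  Derive (fun s' => d_r v s' r) s = dr_ln_ds s r * d_s v s r.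
Proof.
  intros Hs. unfold dr_ln_ds.
  field_simplify; [| pose proof (d_s_v_pos s r ltac:(lra)); lra].
  apply Schwarz.
  - assert (Hd : 0 < Rmin (s - slo) (shi - s)) by (apply Rmin_pos; lra).
    exists (mkposreal _ Hd). simpl. intros u w Hu _.
    pose proof (Rmin_l (s - slo) (shi - s)). pose proof (Rmin_r (s - slo) (shi - s)).
    apply Rabs_lt_between in Hu.
    assert (Hu' : slo <= u <= shi) by lra.
    repeat split.
    + apply differentiable_pt_ex_derive_l, differentiable_v, Hu'.
    + apply differentiable_pt_ex_derive_r, differentiable_v, Hu'.
    + apply (differentiable_pt_ex_derive_l (d_r v)), differentiable_d_r_v, Hu'.
    + apply (differentiable_pt_ex_derive_r (d_s v)), differentiable_d_s_v, Hu'.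
  - apply (differentiable_continuity_pt (d_s (d_r v))), differentiable_d_s_d_r_v. lra.
  - apply (differentiable_continuity_pt (d_r (d_s v))), differentiable_d_r_d_s_v. lra.
Qed.

Lemma strictly_single_dipped_d_r_v r : assumption1 slo shi v ->
  strictly_single_dipped slo shi (fun s => d_r v s r).
Proof.
  intros HA.
  apply (strictly_single_dipped_of_Derive _ (fun s => dr_ln_ds s r) (fun s => d_s v s r));
    [exact slo_lt_shi | | | |].
  - intros s Hs. apply (differentiable_pt_ex_derive_l (d_r v)), differentiable_d_r_v, Hs.
  - intros s Hs. apply ex_derive_dr_ln_ds, Hs.
  - intros s Hs. rewrite <- d_s_d_r_ln_d_s_v by exact Hs. apply HA, Hs.
  - intros s Hs. split; [apply d_s_v_pos; lra | apply Derive_d_r_v, Hs].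
Qed.

Section TasteShock.

Variables (Q q : R -> R).
Hypothesis q_pos : forall t, 0 < q t.
Hypothesis ex_derive_q : forall t, ex_derive q t.
Hypothesis Q_derive : forall t, is_derive Q t (q t).
Hypothesis v_eq : forall s r, slo <= s <= shi -> v s r = Q (s - r).

Let dln_q (t : R) : R := Derive (fun u => ln (q u)) t.

Lemma d_s_v_eq s r : slo <= s <= shi -> d_s v s r = q (s - r).
Proof.
  intros Hs. unfold d_s.
  apply (is_derive_unique_on_interval (fun s' => v s' r) (fun s' => Q (s' - r)) slo shi s);
    [exact slo_lt_shi | exact Hs | intros y Hy; apply v_eq, Hy | |].
  - apply Derive_correct, differentiable_pt_ex_derive_l, differentiable_v, Hs.
  - auto_derive; [exists (q (s - r)); apply Q_derive |].
    rewrite Rmult_1_l. apply is_derive_unique, Q_derive.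
Qed.

Lemma dln_q_eq t : dln_q t = Derive q t / q t.
Proof.
  unfold dln_q.
  rewrite (Derive_comp ln q t); [| exists (/ q t); apply is_derive_ln, q_pos | apply ex_derive_q].
  rewrite (is_derive_unique ln (q t) (/ q t)) by apply is_derive_ln, q_pos.
  unfold Rdiv. ring.
Qed.

Lemma dr_ln_ds_eq s r : slo <= s <= shi -> dr_ln_ds s r = - dln_q (s - r).
Proof.
  intros Hs. unfold dr_ln_ds, d_r.
  rewrite (Derive_ext (fun r' => d_s v s r') (fun r' => q (s - r')))
    by (intros; apply d_s_v_eq, Hs).
  rewrite d_s_v_eq, dln_q_eq by exact Hs.
  rewrite (Derive_comp q (fun r' => s - r') r); [| apply ex_derive_q | auto_derive; exact I].
  replace (Derive (fun r' => s - r') r) with (-1)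
    by (symmetry; apply is_derive_unique; auto_derive; [exact I | ring]).
  field. apply Rgt_not_eq, q_pos.
Qed.

(* [q] is only assumed differentiable once; the second derivative of [ln q] exists because,
   near any [t], [dln_q] is a shift of [- dr_ln_ds] at an interior point of the strip. *)
Lemma ex_derive_dln_q t : ex_derive dln_q t.
Proof.
  set (s0 := (slo + shi) / 2). set (r0 := s0 - t).
  apply ex_derive_ext_loc with (fun u => - dr_ln_ds (u + r0) r0).
  - assert (Hd : 0 < (shi - slo) / 2) by lra.
    exists (mkposreal _ Hd). intros u Hu. change R in u.
    change (Rabs (u - t) < (shi - slo) / 2) in Hu.
    apply Rabs_lt_between in Hu.
    rewrite dr_ln_ds_eq by (unfold r0, s0; lra).
    replace (u + r0 - r0) with u by ring. apply Ropp_involutive.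
  - apply (ex_derive_opp (fun u => dr_ln_ds (u + r0) r0)).
    apply (ex_derive_comp (fun s' => dr_ln_ds s' r0) (fun u => u + r0)).
    + replace (t + r0) with s0 by (unfold r0; ring). apply ex_derive_dr_ln_ds. unfold s0; lra.
    + auto_derive. exact I.
Qed.

Lemma d_s_d_r_ln_d_s_v_eq s r : slo <= s <= shi ->
  d_s (d_r (fun s' r' => ln (d_s v s' r'))) s r = - Derive dln_q (s - r).
Proof.
  intros Hs. rewrite d_s_d_r_ln_d_s_v by exact Hs.
  apply (is_derive_unique_on_interval (fun s' => dr_ln_ds s' r) (fun s' => - dln_q (s' - r))
           slo shi s); [exact slo_lt_shi | exact Hs | intros y Hy; apply dr_ln_ds_eq, Hy | |].
  - apply Derive_correct, ex_derive_dr_ln_ds, Hs.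
  - auto_derive; [apply ex_derive_dln_q | now rewrite Rmult_1_l].
Qed.

Lemma assumption1_iff_strictly_log_concave :
  assumption1 slo shi v <-> strictly_log_concave q.
Proof.
  split.
  - intros HA t.
    specialize (HA slo (slo - t) ltac:(lra)).
    rewrite d_s_d_r_ln_d_s_v_eq in HA by lra.
    replace (slo - (slo - t)) with t in HA by ring. fold dln_q. lra.
  - intros Hlc s r Hs.
    rewrite d_s_d_r_ln_d_s_v_eq by exact Hs.
    specialize (Hlc (s - r)). fold dln_q in Hlc. lra.
Qed.

End TasteShock.

End SwingyModerates.

Theorem proposition5 (slo shi : R) (v : R -> R -> R) :
  slo < shi ->
  (* v : [slo, shi] x R -> [0, 1] *)
  (forall s r, slo <= s <= shi -> 0 <= v s r <= 1) ->
  (* four times differentiable *)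
  diffn (strip slo shi) 4 v ->
  (* strictly increasing in s, with dv/ds > 0 *)
  (forall s1 s2 r, slo <= s1 -> s1 < s2 -> s2 <= shi -> v s1 r < v s2 r) ->
  (forall s r, slo <= s <= shi -> d_s v s r > 0) ->
  (* strictly decreasing in r *)
  (forall s r1 r2, slo <= s <= shi -> r1 < r2 -> v s r2 < v s r1) ->
  (* (1) logistic-type case v(s,r) = Q(s - r) *)
  (forall (Q q : R -> R),
      (forall t, 0 < q t) ->
      (forall t, ex_derive q t) ->
      (forall t, is_derive Q t (q t)) ->
      is_lim Q m_infty 0 ->
      is_lim Q p_infty 1 ->
      (forall s r, slo <= s <= shi -> v s r = Q (s - r)) ->
      (assumption1 slo shi v <-> strictly_log_concave q))
  /\
  (* (2) *)
  (assumption1 slo shi v ->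
     forall r, strictly_single_dipped slo shi (fun s => d_r v s r)).
Proof.
  intros Hlt _ Hdiff _ Hpos _.
  pose proof (diffn_pred _ _ _ Hdiff) as Hdiff3.
  split.
  - intros Q q Hq Hq' HQ _ _ Hvq.
    eapply assumption1_iff_strictly_log_concave; eassumption.
  - intros HA r.
    eapply strictly_single_dipped_d_r_v; eassumption.
Qed.
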